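(* Let $n\geq 4$ and $G\in\mathcal{GAQ}_n$. Let $(a,b)$ be an edge of $G$, let $A$ be the set of neighbors of $a$ and $B$ the set of neighbors of $b$. Then $A\setminus\{b\}\neq B\setminus\{a\}$.
   Context: The $n$-dimensional augmented cube $AQ_n$ ($n\geq 1$) has vertex set all binary strings $u_1u_2\cdots u_n$. $AQ_1\cong K_2$ on vertices $0,1$. For $n\geq 2$, $AQ_n$ consists of a copy $AQ^0_{n-1}$ of $AQ_{n-1}$ with $0$ prefixed to every label and a copy $AQ^1_{n-1}$ with $1$ prefixed, plus the following edges: $0u_1\cdots u_{n-1}$ is adjacent to $1v_1\cdots v_{n-1}$ iff either $u_i=v_i$ for all $i$ (cross edge) or $u_i\neq v_i$ for all $i$ (complement edge). $AQ_n$ is $(2n-1)$-regular. Generalized augmented cubes: $\mathcal{GAQ}_4=\{AQ_4\}$; for $n\geq 5$, $\mathcal{GAQ}_n$ consists of all graphs $(V_1\cup V_2, E_1\cup E_2\cup M_1\cup M_2)$ where $(V_1,E_1),(V_2,E_2)$ are (vertex-disjoint copies of, possibly identical) graphs in $\mathcal{GAQ}_{n-1}$ and $M_1,M_2$ are edge-disjoint perfect matchings between $V_1$ and $V_2$. A generalized augmented cube is a graph in $\mathcal{GAQ}_n$ for some $n\geq 4$. *)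

(* Vertices of graphs in GAQ_n are labelled by bit strings
   n.-tuple bool; a graph is its adjacency relation. *)
From HB Require Import structures.
From mathcomp Require Import all_boot fingroup perm.
Set Implicit Arguments. Unset Strict Implicit. Unset Printing Implicit Defensive.

(* Adjacency in the augmented cube AQ_n, on bit strings of length n >= 1.
   AQ_1 = K_2; for n >= 2, b::s ~ c::t iff (b = c and s ~ t in AQ_{n-1})
   or (b <> c and (s = t (cross edge) or s, t differ in every bit
   (complement edge))). *)
Fixpoint aq (s t : seq bool) : bool :=
  match s, t with
  | [:: b], [:: c] => b != c
  | b :: s', c :: t' =>
      if b == c then aq s' t' else (s' == t') || (t' == map negb s')
  | _, _ => false
  end.

Definition AQ (n : nat) : rel (n.-tuple bool) := fun u v => aq u v.

(* The graph (V1 u V2, E1 u E2 u M1 u M2): V1 = strings with first bit 0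
   (a copy of G1), V2 = strings with first bit 1 (a copy of G2),
   M_i = { {0u, 1 (f_i u)} } the perfect matching given by the bijection f_i. *)
Definition gaq_join (n : nat) (G1 G2 : rel (n.-tuple bool))
  (f1 f2 : {perm n.-tuple bool}) : rel (n.+1.-tuple bool) :=
  fun x y =>
    let u := behead_tuple x in let v := behead_tuple y in
    match thead x, thead y with
    | false, false => G1 u v
    | true, true => G2 u v
    | false, true => (v == f1 u) || (v == f2 u)
    | true, false => (u == f1 v) || (u == f2 v)
    end.

Unset Implicit Arguments.
Inductive GAQ : forall n : nat, (rel (n.-tuple bool)) -> Prop :=
  | GAQ_base : GAQ 4 (@AQ 4)
  | GAQ_step (n : nat) (G1 G2 : rel (n.-tuple bool))
      (f1 f2 : {perm n.-tuple bool}) :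
      GAQ n G1 -> GAQ n G2 ->
      (forall u, f1 u != f2 u) ->   (* M1, M2 edge-disjoint *)
      GAQ n.+1 (gaq_join G1 G2 f1 f2).

From mathcomp Require Import all_boot fingroup perm.
Set Implicit Arguments. Unset Strict Implicit. Unset Printing Implicit Defensive.

(* Call x a separator of the edge ab if x is adjacent to exactly one of a, b
   (x = a, b excluded); the theorem says every edge has one.  For AQ_4 this
   is a finite check.  In G = gaq_join G1 G2 f1 f2 an edge inside a copy is
   separated by the lift of a separator inside that copy.  For a cross edge
   0u - 1v, the vertex 0u has only two neighbours 1(f1 u), 1(f2 u) in the
   other copy, one of which is 1v; but v has two distinct neighbours p, q in
   G2, and if both 1p, 1q were adjacent to 0u they would both equal the other
   one.  So it suffices to carry "every vertex has two distinct neighbours"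
   along the induction. *)

Section Separators.

Variables (T : finType) (G : rel T).

Definition separates (a b x : T) := (G a x && (x != b)) != (G b x && (x != a)).

Definition edges_separated := forall a b, G a b -> exists x, separates a b x.

Definition two_neighbours := forall u, exists x y, [/\ x != y, G u x & G u y].

Lemma separates_sym a b x : separates a b x = separates b a x.
Proof. by rewrite /separates eq_sym. Qed.

Lemma separated_neighbourhoods_neq a b :
  (exists x, separates a b x) -> [set x | G a x] :\ b != [set x | G b x] :\ a.
Proof.
case=> x; apply: contra => /eqP nbhd_eq.
have mem c d : (x \in [set y | G c y] :\ d) = G c x && (x != d).
  by rewrite in_setD1 inE andbC.
by rewrite /separates -!mem nbhd_eq eqxx.
Qed.

End Separators.

Lemma pair_other (T : eqType) (a b v p q : T) :
  v \in [:: a; b] -> p \in [:: a; b] -> q \in [:: a; b] ->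
  p != v -> q != v -> p = q.
Proof. by rewrite !inE; do 3!case/orP=> /eqP->; rewrite ?eqxx. Qed.

Fixpoint words n : seq (n.-tuple bool) :=
  if n is m.+1 then [seq cons_tuple h w | h <- [:: false; true], w <- words m]
  else [:: [tuple]].

Lemma mem_words n (u : n.-tuple bool) : u \in words n.
Proof.
elim: n u => [|n IHn] u; first by rewrite tuple0 inE.
case: u / tupleP => h w; change (cons_tuple h w \in words n.+1).
by case: h; rewrite /= !mem_cat map_f ?orbT.
Qed.

Lemma AQ4_edges_separated : edges_separated (@AQ 4).
Proof.
have check : all (fun a => all (fun b =>
    AQ a b ==> has (separates (@AQ 4) a b) (words 4)) (words 4)) (words 4).
  by vm_compute.
move=> a b ab; have /allP/(_ b (mem_words b)) := allP check a (mem_words a).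
by rewrite ab => /hasP[x _ sep]; exists x.
Qed.

Lemma AQ4_two_neighbours : two_neighbours (@AQ 4).
Proof.
have check : all (fun u => has (fun x => has (fun y =>
    [&& x != y, AQ u x & AQ u y]) (words 4)) (words 4)) (words 4).
  by vm_compute.
move=> u; have /hasP[x _ /hasP[y _ /and3P[]]] := allP check u (mem_words u).
by exists x, y.
Qed.

Lemma eq_cons_tuple n (T : eqType) (h h' : T) (u v : n.-tuple T) :
  (cons_tuple h u == cons_tuple h' v) = (h == h') && (u == v).
Proof. by rewrite -val_eqE /= eqseq_cons val_eqE. Qed.

Section Join.

Variables (n : nat) (G1 G2 : rel (n.-tuple bool)).
Variables (f1 f2 : {perm n.-tuple bool}).

Local Notation J := (gaq_join G1 G2 f1 f2).

Lemma gaq_join_cons (h h' : bool) (u v : n.-tuple bool) :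
  J (cons_tuple h u) (cons_tuple h' v) =
  match h, h' with
  | false, false => G1 u v
  | true, true => G2 u v
  | false, true => v \in [:: f1 u; f2 u]
  | true, false => u \in [:: f1 v; f2 v]
  end.
Proof.
have behead_cons (h'' : bool) w : behead_tuple (cons_tuple h'' w) = w.
  exact: val_inj.
by rewrite /gaq_join !theadE !behead_cons; case: h; case: h'; rewrite ?inE.
Qed.

Lemma gaq_join_two_neighbours :
  two_neighbours G1 -> two_neighbours G2 -> two_neighbours J.
Proof.
move=> deg1 deg2 x; case: x / tupleP => [[|] u].
- have [p [q [pq Gp Gq]]] := deg2 u.
  exists (cons_tuple true p), (cons_tuple true q).
  by rewrite !gaq_join_cons eq_cons_tuple.
- have [p [q [pq Gp Gq]]] := deg1 u.
  exists (cons_tuple false p), (cons_tuple false q).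
  by rewrite !gaq_join_cons eq_cons_tuple.
Qed.

Lemma gaq_join_cross_separated u v :
  two_neighbours G2 -> J (cons_tuple false u) (cons_tuple true v) ->
  exists x, separates J (cons_tuple false u) (cons_tuple true v) x.
Proof.
move=> deg2 uv; apply/existsP; apply: contraT.
rewrite negb_exists => /forallP no_sep.
have [p [q [pq Gp Gq]]] := deg2 v.
have lift x : G2 v x -> x \in [:: f1 u; f2 u] /\ x != v.
  move=> Gx; have := no_sep (cons_tuple true x).
  by rewrite negbK !gaq_join_cons !eq_cons_tuple Gx /= => /eqP/andP.
rewrite gaq_join_cons in uv.
have [[p_nbr pv] [q_nbr qv]] := (lift p Gp, lift q Gq).
by rewrite (pair_other uv p_nbr q_nbr pv qv) eqxx in pq.
Qed.

Lemma gaq_join_edges_separated :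
  edges_separated G1 -> edges_separated G2 -> two_neighbours G2 ->
  edges_separated J.
Proof.
move=> sep1 sep2 deg2 a b; case: a / tupleP => h u; case: b / tupleP => h' v.
case: h; case: h'; rewrite gaq_join_cons => ab.
- have [x sep] := sep2 u v ab; exists (cons_tuple true x).
  by rewrite /separates !gaq_join_cons !eq_cons_tuple.
- have [x sep] :
      exists x, separates J (cons_tuple false v) (cons_tuple true u) x.
    by apply: gaq_join_cross_separated; rewrite // gaq_join_cons.
  by exists x; rewrite separates_sym.
- by apply: gaq_join_cross_separated; rewrite // gaq_join_cons.
- have [x sep] := sep1 u v ab; exists (cons_tuple false x).
  by rewrite /separates !gaq_join_cons !eq_cons_tuple.
Qed.

End Join.

Lemma GAQ_edges_separated_two_neighbours n (G : rel (n.-tuple bool)) :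
  GAQ n G -> edges_separated G /\ two_neighbours G.
Proof.
elim=> [|m G1 G2 f1 f2 _ [sep1 deg1] _ [sep2 deg2] _].
- exact: (conj AQ4_edges_separated AQ4_two_neighbours).
- split; [exact: gaq_join_edges_separated | exact: gaq_join_two_neighbours].
Qed.

Theorem lemma3p1 (n : nat) (G : rel (n.-tuple bool)) :
  4 <= n -> GAQ n G ->
  forall a b : n.-tuple bool, G a b ->
  [set x | G a x] :\ b != [set x | G b x] :\ a.
Proof.
(* 4 <= n is implied by GAQ n G. *)
move=> _ HG a b ab.
exact/separated_neighbourhoods_neq/(GAQ_edges_separated_two_neighbours HG).1.
Qed.
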